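(* Let $\mathcal{S}$ be a compact surface without boundary and let $(\mathfrak{u},\mathfrak{l})$ be a labeled unicellular mobile on $\mathcal{S}$. Then: (i) If $A$ and $B$ are two distinct nontrivial arcs of $(\mathfrak{u},\mathfrak{l})$ whose intersection contains internal corners of $A$ or of $B$, then $A\subseteq B$ or $B\subseteq A$, and the level of the larger arc is strictly lower than the level of the smaller arc. (ii) The following three properties are equivalent: (a) for all $i\ge 1$, every nontrivial arc at level $i$ contains a corner with label $i+1$; (b) for all $i\ge 1$, every nontrivial arc at level $i$ has a set of internal corner labels of the form $\{i+1,i+2,\dots,m\}$ for some integer $m$; (c) for all $i\ge 2$ and for every corner with label $i$, either the first subsequent corner with label strictly smaller than $i$ has label $i-1$, or the last preceding corner with label strictly smaller than $i$ has label $i-1$. (iii) If the equivalent properties of (ii) hold, then for all $i\ge 2$, every arc at level $i$ is included in a unique arc at level $i-1$, and this arc is nontrivial; similarly, every corner labeled $i\ge 2$ is included in a unique arc at level $i-1$, and this arc is nontrivial.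
   Context: A map is a cellular embedding of a finite graph (loops and multiple edges allowed) into $\mathcal{S}$, considered up to homeomorphism; it is rooted when given a distinguished oriented corner (a corner is an angular sector between two consecutive half-edges around a vertex in the same face). A labeled unicellular mobile is a pair $(\mathfrak{u},\mathfrak{l})$ where $\mathfrak{u}$ is a rooted map of $\mathcal{S}$ with exactly one face, whose vertex set is partitioned as $V_\bullet(\mathfrak{u})\sqcup V_\circ(\mathfrak{u})$ so that every edge links a vertex of $V_\bullet(\mathfrak{u})$ to a vertex of $V_\circ(\mathfrak{u})$, the root vertex lies in $V_\circ(\mathfrak{u})$, and $\mathfrak{l}:V_\circ(\mathfrak{u})\to\{1,2,3,\dots\}$ is a function with minimum $1$. Since the face is a disk and the root orients it, the corners of $\mathfrak{u}$ are cyclically ordered along the contour of the face; only corners incident to vertices of $V_\circ(\mathfrak{u})$ are considered, in this cyclic order, and the label of a corner is the label of its vertex (''subsequent''/''preceding'' refer to this cyclic order). An arc is a contiguous interval of two or more consecutive such corners whose first and last corners (its extremities) have labels strictly smaller than the labels of all other corners of the interval (its internal corners). An arc whose extremities have labels $i$ and $j$ is an $\{i,j\}$-arc and its level is $\max(i,j)$. An arc is trivial if it has exactly two corners. *)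

From mathcomp Require Import all_boot.
Set Implicit Arguments. Unset Strict Implicit. Unset Printing Implicit Defensive.

(* A labeled unicellular mobile is abstracted by the cyclic sequence [s] of
   the labels of its corners incident to white vertices (V_circ), listed in
   the cyclic contour order of the unique face, starting from the root corner.
   All notions of the statement (arcs, levels, subsequent/preceding corners)
   only depend on this sequence. *)

(* Corners are indexed by 0 .. size s - 1; a position p : nat denotes the
   corner p %% size s (walking p steps along the contour from the root). *)
Definition lab (s : seq nat) (p : nat) : nat := nth 0 s (p %% size s).

Definition mobile_labels (s : seq nat) : Prop :=
  0 < size s /\ all (fun x => 0 < x) s /\ 1 \in s.

(* An interval of consecutive corners is encoded by (st, k): it consists of
   the k+1 consecutive corners at positions st, st+1, ..., st+k (mod size s),
   with st < size s and 1 <= k <= size s (k = size s: the interval goes once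
   around the face, its two extremities being the same corner). *)
Definition interval (s : seq nat) (a : nat * nat) : Prop :=
  a.1 < size s /\ 0 < a.2 /\ a.2 <= size s.

Definition is_arc (s : seq nat) (a : nat * nat) : Prop :=
  interval s a /\
  forall j, 0 < j -> j < a.2 ->
    lab s a.1 < lab s (a.1 + j) /\ lab s (a.1 + a.2) < lab s (a.1 + j).

Definition trivial_arc (a : nat * nat) : Prop := a.2 = 1.

Definition level (s : seq nat) (a : nat * nat) : nat :=
  maxn (lab s a.1) (lab s (a.1 + a.2)).

Definition corner_in (s : seq nat) (a : nat * nat) (c : nat) : Prop :=
  exists j, j <= a.2 /\ (a.1 + j) %% size s = c.

Definition internal_corner (s : seq nat) (a : nat * nat) (c : nat) : Prop :=
  exists j, 0 < j /\ j < a.2 /\ (a.1 + j) %% size s = c.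

Definition arc_sub (s : seq nat) (a b : nat * nat) : Prop :=
  exists d, d + a.2 <= b.2 /\ a.1 = (b.1 + d) %% size s.

Definition prop_a (s : seq nat) : Prop :=
  forall i, 1 <= i -> forall A, is_arc s A -> ~ trivial_arc A ->
    level s A = i -> exists c, c < size s /\ corner_in s A c /\ lab s c = i.+1.

Definition prop_b (s : seq nat) : Prop :=
  forall i, 1 <= i -> forall A, is_arc s A -> ~ trivial_arc A ->
    level s A = i -> exists m, forall x,
      (exists c, internal_corner s A c /\ lab s c = x) <-> (i.+1 <= x /\ x <= m).

Definition prop_c (s : seq nat) : Prop :=
  forall c, c < size s -> 2 <= lab s c ->
    (exists d, [/\ 0 < d, d <= size s, lab s (c + d) = (lab s c).-1 &
                 forall e, 0 < e -> e < d -> lab s c <= lab s (c + e)])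
    \/
    (exists d, [/\ 0 < d, d <= size s, lab s (c + size s - d) = (lab s c).-1 &
                 forall e, 0 < e -> e < d -> lab s c <= lab s (c + size s - e)]).

From mathcomp Require Import all_boot zify.
Set Implicit Arguments. Unset Strict Implicit. Unset Printing Implicit Defensive.

(* Unroll the contour: a corner becomes a position [p : nat] carrying the
   label [lab s p], which is periodic of period [size s], and an arc becomes a
   window of positions whose inner labels exceed both end labels.  Two windows
   sharing an inner point of one of them cannot cross, since at a crossing each
   end label would exceed the other; this gives (i) and the drop of level.
   A position [p] of label >= 2 lies in a smallest arc, its bracket, running
   from the last preceding to the first subsequent label < [lab s p].
   Property (c) says that every bracket has level [lab s p - 1].  Property (a)
   forces this, because the label [level + 1] it provides inside the bracket
   cannot sit at an end, and inner labels of the bracket are >= [lab s p].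
   Conversely, if brackets have level [lab s p - 1], the bracket of an inner
   corner of label [v > i + 1] of an arc at level [i] stays inside that arc
   and one of its ends is an inner corner of label [v - 1]; so the inner labels
   form an interval, which is (b).  For (iii), an arc at level [lab s p - 1]
   containing [p] is necessarily the bracket of [p]. *)

Lemma first_below (f : nat -> nat) t w : 0 < w -> f w < t ->
  exists d, [/\ 0 < d, d <= w, f d < t & forall e, 0 < e -> e < d -> t <= f e].
Proof.
move=> w0 fw.
have ex : exists d, [&& 0 < d, d <= w & f d < t] by exists w; rewrite w0 leqnn fw.
case: (ex_minnP ex) => d /and3P[d0 dw fd] dmin.
exists d; split=> // e e0 ed; rewrite leqNgt; apply/negP => fe.
have := dmin e; rewrite e0 fe (leq_trans (ltnW ed) dw) => /(_ isT); lia.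
Qed.

Lemma first_below_unique (f : nat -> nat) t d1 d2 : 0 < d1 -> 0 < d2 ->
  f d1 < t -> f d2 < t -> (forall e, 0 < e -> e < d1 -> t <= f e) ->
  (forall e, 0 < e -> e < d2 -> t <= f e) -> d1 = d2.
Proof.
move=> d10 d20 f1 f2 m1 m2.
have [d12|[->//|d21]] : d1 < d2 \/ d1 = d2 \/ d2 < d1 by lia.
- by have := m2 d1 d10 d12; lia.
- by have := m1 d2 d20 d21; lia.
Qed.

Lemma descent_interval (P : nat -> Prop) lo m : P m ->
  (forall v, P v -> lo.+1 < v -> P v.-1) -> forall v, lo < v <= m -> P v.
Proof.
move=> Pm step v /andP[lv vm].
suff Pd d : d <= m - v -> P (m - d) by rewrite -(subKn vm); apply: Pd.
elim: d => [|d IH] dm; first by rewrite subn0.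
by rewrite subnS; apply: step; [apply: IH | ]; lia.
Qed.

Section Labels.

Variable s : seq nat.
Local Notation n := (size s).

Lemma lab_eqmod p q : p = q %[mod n] -> lab s p = lab s q.
Proof. by rewrite /lab => ->. Qed.

Lemma lab_modn p : lab s (p %% n) = lab s p.
Proof. by apply: lab_eqmod; rewrite modn_mod. Qed.

Lemma lab_addn p : lab s (p + n) = lab s p.
Proof. by apply: lab_eqmod; rewrite modnDr. Qed.

Lemma lab_eqmodD p q j : p = q %[mod n] -> lab s (p + j) = lab s (q + j).
Proof. by move=> E; apply: lab_eqmod; rewrite -modnDml E modnDml. Qed.

Lemma lab_eqmodB p q e : p = q %[mod n] -> e <= p -> e <= q ->
  lab s (p - e) = lab s (q - e).
Proof.
move=> E ep eq; apply: lab_eqmod; apply/eqP.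
by rewrite -(eqn_modDr e) !subnK // E.
Qed.

Lemma lab_pos p : mobile_labels s -> 0 < lab s p.
Proof.
move=> [n0 [/allP pos _]]; apply: pos.
by rewrite mem_nth // ltn_pmod.
Qed.

Lemma offset_start_modn a j c : a < n -> j <= n -> (a + j) %% n = c -> (c + n - j) %% n = a.
Proof.
move=> an jn E; rewrite -(modn_small an); apply/eqP.
have jc : j <= c + n by apply: leq_trans jn (leq_addl _ _).
by rewrite -(eqn_modDr j) subnK // modnDr -E modn_mod.
Qed.

Definition line_arc x k := forall j, 0 < j -> j < k ->
  lab s x < lab s (x + j) /\ lab s (x + k) < lab s (x + j).

Lemma line_arc_eqmod x y k : x = y %[mod n] -> line_arc x k -> line_arc y k.
Proof.
move=> E A j j0 jk; rewrite -(lab_eqmod E) -!(lab_eqmodD _ E); exact: A.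
Qed.

Lemma level_eqmod x y k : x = y %[mod n] -> level s (x, k) = level s (y, k).
Proof. by move=> E; rewrite /level /= (lab_eqmod E) (lab_eqmodD _ E). Qed.

Lemma line_arcs_nested x k y l p : line_arc x k -> line_arc y l ->
  x < p < x + k -> y <= p <= y + l ->
  (x <= y /\ y + l <= x + k) \/ (y <= x /\ x + k <= y + l).
Proof.
move=> Ax Ay /andP[xp pk] /andP[yp pl].
have [yx|xy] : y < x \/ x <= y by lia.
- have [kl|lk] : x + k <= y + l \/ y + l < x + k by lia.
    by right; lia.
  have [h1 _] := Ax (y + l - x) ltac:(lia) ltac:(lia).
  have [_ h2] := Ay (x - y) ltac:(lia) ltac:(lia).
  rewrite subnKC in h1; last lia.
  rewrite subnKC in h2; lia.
- have [lk|kl] : y + l <= x + k \/ x + k < y + l by lia.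
    by left.
  have [exy|{}xy] : x = y \/ x < y by lia.
    by right; lia.
  have [_ h1] := Ax (y - x) ltac:(lia) ltac:(lia).
  have [h2 _] := Ay (x + k - y) ltac:(lia) ltac:(lia).
  rewrite subnKC in h1; last lia.
  rewrite subnKC in h2; lia.
Qed.

Lemma level_lt_nested x k y l : line_arc x k -> 0 < l ->
  x <= y -> y + l <= x + k -> (x, k) <> (y, l) -> level s (x, k) < level s (y, l).
Proof.
rewrite /level /= => Ax l0 xy lk ne.
have [{}xy|exy] : x < y \/ x = y by lia.
  have [h1 h2] := Ax (y - x) ltac:(lia) ltac:(lia).
  rewrite subnKC in h1 h2; lia.
have lk' : l < k.
  have [//|ekl] : l < k \/ l = k by lia.
  by case: ne; rewrite exy ekl.
have [] := Ax l l0 lk'; rewrite exy; lia.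
Qed.

Definition bracket p x k :=
  [/\ x < p < x + k, lab s x < lab s p, lab s (x + k) < lab s p &
      forall j, 0 < j -> j < k -> lab s p <= lab s (x + j)].

Lemma bracket_exists p wl wr : 0 < wl <= p -> 0 < wr ->
  lab s (p - wl) < lab s p -> lab s (p + wr) < lab s p ->
  exists x k, [/\ bracket p x k, p - wl <= x & x + k <= p + wr].
Proof.
move=> /andP[wl0 wlp] wr0 hl hr.
have [dl [dl0 dlw hdl ml]] := first_below (f := fun e => lab s (p - e)) wl0 hl.
have [dr [dr0 drw hdr mr]] := first_below (f := fun e => lab s (p + e)) wr0 hr.
exists (p - dl), (dl + dr); split; [split|lia|lia].
- lia.
- by [].
- by have -> : p - dl + (dl + dr) = p + dr by lia.
- move=> j j0 jk.
  have [jl|[->|lj]] : j < dl \/ j = dl \/ dl < j by lia.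
  + have -> : p - dl + j = p - (dl - j) by lia.
    apply: ml; lia.
  + by rewrite subnK //; lia.
  + have -> : p - dl + j = p + (j - dl) by lia.
    apply: mr; lia.
Qed.

Lemma bracket_line_arc p x k : bracket p x k -> line_arc x k.
Proof. by case=> _ hx hk hin j j0 jk; have := hin j j0 jk; lia. Qed.

Lemma bracket_unique p x k y l : bracket p x k -> bracket p y l -> x = y /\ k = l.
Proof.
move=> [/andP[xp pk] hx hk inx] [/andP[yp pl] hy hl iny].
have ex : x = y.
  have [xy|[//|yx]] : x < y \/ x = y \/ y < x by lia.
  - by have := inx (y - x) ltac:(lia) ltac:(lia); rewrite subnKC; lia.
  - by have := iny (x - y) ltac:(lia) ltac:(lia); rewrite subnKC; lia.
split=> //; subst y.
have [kl|[//|lk]] : k < l \/ k = l \/ l < k by lia.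
- by have := iny k ltac:(lia) kl; lia.
- by have := inx l ltac:(lia) lk; lia.
Qed.

Lemma bracket_size p x k : bracket p x k -> k <= n.
Proof.
move=> [/andP[xp pk] hx hk hin]; rewrite leqNgt; apply/negP => nk.
have [n0|n0] : n = 0 \/ 0 < n by lia.
  by move: hx; rewrite /lab (size0nil n0) !nth_nil.
by have := hin n n0 nk; rewrite lab_addn; lia.
Qed.

Lemma bracket_addn p x k : bracket p x k -> bracket (p + n) (x + n) k.
Proof.
move=> [xpk hx hk hin]; split; first lia.
- by rewrite !lab_addn.
- by rewrite addnAC !lab_addn.
- by move=> j j0 jk; rewrite addnAC !lab_addn; apply: hin.
Qed.

Lemma bracket_of_line_arc p x k : line_arc x k -> x < p < x + k ->
  (level s (x, k)).+1 = lab s p -> bracket p x k.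
Proof.
rewrite /level /= => A /andP[xp pk] lv.
have [hx hk] := A (p - x) ltac:(lia) ltac:(lia); rewrite subnKC in hx hk; last lia.
split; [lia|lia|lia|] => j j0 jk.
have [] := A j j0 jk; lia.
Qed.

Lemma bracket_covers p y l x k : bracket p y l -> line_arc x k ->
  x = p \/ x + k = p -> y <= x /\ x + k <= y + l.
Proof.
move=> [/andP[yp pl] hy hl _] A [xp|kp]; subst p.
- split; first lia; rewrite leqNgt; apply/negP => lk.
  by have := A (y + l - x) ltac:(lia) ltac:(lia); rewrite subnKC; lia.
- split; last lia; rewrite leqNgt; apply/negP => xy.
  by have := A (y - x) ltac:(lia) ltac:(lia); rewrite subnKC; lia.
Qed.

Lemma is_arc_modn x k : 0 < k <= n -> line_arc x k -> is_arc s (x %% n, k).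
Proof.
move=> /andP[k0 kn] A; split; first by split=> //=; rewrite ltn_pmod //; lia.
by apply: line_arc_eqmod A; rewrite modn_mod.
Qed.

Lemma line_arc_of_arc a k x : is_arc s (a, k) -> x %% n = a -> line_arc x k.
Proof.
move=> [[/= an _] A] xa; apply: line_arc_eqmod A.
by rewrite xa modn_small.
Qed.

Lemma arc_sub_of_line a k b l x y : x %% n = a -> y %% n = b ->
  y <= x -> x + k <= y + l -> arc_sub s (a, k) (b, l).
Proof.
move=> xa yb yx kl; exists (x - y); split; first by rewrite /=; lia.
by rewrite /= -xa -yb modnDml subnKC.
Qed.

Lemma corner_in_sub A B c : arc_sub s A B -> corner_in s A c -> corner_in s B c.
Proof.
case: A B => [a k] [b l] [d [/= dk ->]] [j [/= jk bc]].
by exists (d + j); split; [rewrite /=; lia | rewrite /= addnA -modnDml].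
Qed.

Lemma arcs_nested A B c : is_arc s A -> is_arc s B -> A <> B ->
  internal_corner s A c -> corner_in s B c ->
  (arc_sub s A B /\ level s B < level s A) \/ (arc_sub s B A /\ level s A < level s B).
Proof.
case: A B => [a k] [b l] HA HB ne [j [j0 [/= jk ac]]] [m [/= ml bc]].
have [[/= an [k0 kn]] _] := HA; have [[/= bn [l0 ln]] _] := HB.
have xa := offset_start_modn an (ltnW (leq_trans jk kn)) ac.
have yb := offset_start_modn bn (leq_trans ml ln) bc.
have Ax := line_arc_of_arc HA xa; have Ay := line_arc_of_arc HB yb.
have cn : c < n by rewrite -ac ltn_pmod //; lia.
rewrite (@level_eqmod a (c + n - j)); last by rewrite xa modn_small.
rewrite (@level_eqmod b (c + n - m)); last by rewrite yb modn_small.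
have ne' : (c + n - j, k) <> (c + n - m, l).
  by case=> ex el; apply: ne; rewrite -xa -yb ex el.
have cA : c + n - j < c + n < c + n - j + k by clear -j0 jk kn; lia.
have cB : c + n - m <= c + n <= c + n - m + l by clear -ml ln; lia.
have [[h1 h2]|[h1 h2]] := line_arcs_nested Ax Ay cA cB.
- by right; split; [exact: arc_sub_of_line yb xa h1 h2 | exact: level_lt_nested Ax l0 h1 h2 ne'].
- left; split; first exact: arc_sub_of_line xa yb h1 h2.
  by apply: level_lt_nested Ay k0 h1 h2 _ => -[ex el]; apply: ne'; rewrite ex el.
Qed.

Lemma arc_of_bracket p x k : bracket p x k ->
  [/\ is_arc s (x %% n, k), corner_in s (x %% n, k) (p %% n),
      ~ trivial_arc (x %% n, k) & level s (x %% n, k) = level s (x, k)].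
Proof.
move=> B; have kn := bracket_size B; have A := bracket_line_arc B.
case: B => /andP[xp pk] _ _ _; split.
- by apply: is_arc_modn A; lia.
- by exists (p - x); split; [rewrite /=; lia | rewrite /= modnDml subnKC //; lia].
- by rewrite /trivial_arc /=; lia.
- by apply: level_eqmod; rewrite modn_mod.
Qed.

Lemma corner_bracket c : mobile_labels s -> c < n -> 2 <= lab s c ->
  exists x k, bracket (c + n) x k.
Proof.
move=> [_ [_ s1]] cn c2.
have [q qn q1] : exists2 q, q < n & lab s q = 1.
  by exists (index 1 s); rewrite ?index_mem // /lab modn_small ?index_mem ?nth_index.
have hl : lab s (c + n - (c + n - q)) < lab s (c + n) by rewrite subKn ?q1 ?lab_addn //; lia.
have hr : lab s (c + n + (q + n - c)) < lab s (c + n).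
  have -> : c + n + (q + n - c) = q + n + n by lia.
  by rewrite !lab_addn q1; lia.
have [x [k [B _ _]]] := bracket_exists (p := c + n) (wl := c + n - q) (wr := q + n - c)
  ltac:(lia) ltac:(lia) hl hr.
by exists x, k.
Qed.

Lemma bracket_arc_unique c x k B : c < n -> bracket (c + n) x k -> is_arc s B ->
  (level s B).+1 = lab s c -> corner_in s B c -> B = (x %% n, k).
Proof.
case: B => b l cn Bx HB lv [m [/= ml bm]].
have [[/= bn [l0 ln]] _] := HB.
have yb := offset_start_modn bn (leq_trans ml ln) bm.
have labc : lab s (b + m) = lab s c by rewrite -bm lab_modn.
have lvy : (level s (c + n - m, l)).+1 = lab s (c + n).
  by rewrite (@level_eqmod _ b) ?yb ?modn_small // lv lab_addn.
move: lv; rewrite /level /= => lv.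
have m0 : 0 < m by case: (posnP m) labc => [-> | //]; rewrite addn0; lia.
have ml' : m < l by case: (ltngtP m l) ml labc => // -> _; lia.
have By : bracket (c + n) (c + n - m) l.
  apply: bracket_of_line_arc lvy; first exact: line_arc_of_arc HB yb.
  lia.
have [-> ->] := bracket_unique Bx By.
by rewrite yb.
Qed.

Definition bracket_level := forall p x k, bracket p x k -> (level s (x, k)).+1 = lab s p.

Lemma bracket_level_of_prop_a : mobile_labels s -> prop_a s -> bracket_level.
Proof.
move=> Hs Ha p x k B.
have [HB _ nt lv] := arc_of_bracket B.
have L1 : 1 <= level s (x, k) by have := lab_pos x Hs; rewrite /level /=; lia.
have [c [_ [[e [/= ek <-]] lc]]] := Ha _ L1 _ HB nt lv.
move: lc; rewrite lab_modn (lab_eqmodD _ (modn_mod x n)).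
case: B => /andP[xp pk] hx hk hin; rewrite /level /= => lc.
have [e0|[ekk|e0k]] : e = 0 \/ e = k \/ 0 < e < k by lia.
- by move: lc; rewrite e0 addn0; lia.
- by move: lc; rewrite ekk; lia.
- by have := hin e ltac:(lia) ltac:(lia); lia.
Qed.

Lemma bracket_level_of_prop_c : mobile_labels s -> prop_c s -> bracket_level.
Proof.
move=> Hs Hc.
suff key p x k : n <= p -> bracket p x k -> (level s (x, k)).+1 = lab s p.
  move=> p x k B; have := key _ _ _ (leq_addl p n) (bracket_addn B).
  by rewrite lab_addn (@level_eqmod (x + n) x) // modnDr.
move=> np B; have kn := bracket_size B.
case: B => /andP[xp pk] hx hk hin.
have [c cn pc] : exists2 c, c < n & p = c %[mod n].
  by exists (p %% n); rewrite ?modn_mod // ltn_pmod //; case: Hs.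
have lc : lab s c = lab s p by rewrite (lab_eqmod pc).
have c2 : 2 <= lab s c by have := lab_pos x Hs; lia.
have inr e : 0 < e -> e < x + k - p -> lab s p <= lab s (p + e).
  by move=> e0 ek; rewrite (_ : p + e = x + (p - x + e)); [apply: hin | ]; lia.
have inl e : 0 < e -> e < p - x -> lab s p <= lab s (p - e).
  by move=> e0 ek; rewrite (_ : p - e = x + (p - x - e)); [apply: hin | ]; lia.
rewrite /level /=.
case: (Hc c cn c2) => -[d [d0 dn hd md]].
- have cpd e : lab s (c + e) = lab s (p + e) by apply: lab_eqmodD.
  have dk : d = x + k - p.
    apply: (first_below_unique (f := fun e => lab s (p + e)) (t := lab s p)) => //=.
    + lia.
    + by rewrite -cpd hd lc; lia.
    + by rewrite subnKC //; lia.
    + by move=> e e0 ed; rewrite -cpd -lc; apply: md.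
  by move: hd; rewrite cpd dk subnKC; lia.
- have cpd e : e <= n -> lab s (c + n - e) = lab s (p - e).
    move=> en; apply: lab_eqmodB; first by rewrite modnDr.
    + exact: leq_trans en (leq_addl _ _).
    + exact: leq_trans en np.
  have dx : d = p - x.
    apply: (first_below_unique (f := fun e => lab s (p - e)) (t := lab s p)) => //=.
    + lia.
    + by rewrite -cpd // hd lc; lia.
    + by rewrite subKn //; lia.
    + by move=> e e0 ed; rewrite -cpd -?lc; [apply: md | lia].
  by move: hd; rewrite cpd // dx subKn; lia.
Qed.

Lemma prop_c_of_bracket_level : mobile_labels s -> bracket_level -> prop_c s.
Proof.
move=> Hs BL c cn c2.
have [x [k B]] := corner_bracket Hs cn c2.
have lv := BL _ _ _ B; have kn := bracket_size B.
case: B lv => /andP[xp pk] hx hk hin; rewrite /level /= lab_addn => lv.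
have labn e : lab s (c + e) = lab s (c + e + n) by rewrite lab_addn.
have [lxk|lxx] : lab s (x + k) = (lab s c).-1 \/ lab s x = (lab s c).-1 by lia.
- left; exists (x + k - (c + n)); split; [lia | lia | |].
  + by rewrite labn; have -> : c + (x + k - (c + n)) + n = x + k by lia.
  + move=> e e0 ed; rewrite labn -(lab_addn c).
    by rewrite (_ : c + e + n = x + (c + n - x + e)); [apply: hin | ]; lia.
- right; exists (c + n - x); split; [lia | lia | by rewrite subKn //; lia |].
  move=> e e0 ed; rewrite -(lab_addn c).
  by rewrite (_ : c + n - e = x + (c + n - x - e)); [apply: hin | ]; lia.
Qed.

Lemma internal_labelE a k v :
  (exists c, internal_corner s (a, k) c /\ lab s c = v) <->
  exists2 j, 0 < j < k & lab s (a + j) = v.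
Proof.
split=> [[c [[j [j0 [/= jk <-]]] <-]] | [j /andP[j0 jk] <-]].
  by exists j; rewrite ?lab_modn ?j0.
by exists ((a + j) %% n); rewrite lab_modn; split=> //; exists j.
Qed.

Lemma arc_label_descent a k v : bracket_level -> is_arc s (a, k) ->
  (exists2 j, 0 < j < k & lab s (a + j) = v) -> (level s (a, k)).+1 < v ->
  exists2 j, 0 < j < k & lab s (a + j) = v.-1.
Proof.
move=> BL [_ A] [j /andP[j0 jk] <-]; rewrite /level /= => lv.
have [la lk] := A j j0 jk.
have [y [l [B ay yl]]] := bracket_exists (p := a + j) (wl := j) (wr := k - j)
  ltac:(lia) ltac:(lia) ltac:(by rewrite addnK) ltac:(by rewrite -addnA subnKC // ltnW).
have := BL _ _ _ B; case: B => /andP[yp pl] _ _ _; rewrite /level /= => lvy.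
have [ly|lyl] : lab s y = (lab s (a + j)).-1 \/ lab s (y + l) = (lab s (a + j)).-1 by lia.
- exists (y - a); last by rewrite subnKC //; lia.
  have : y != a by apply/eqP => ya; rewrite ya in ly; lia.
  lia.
- exists (y + l - a); last by rewrite subnKC //; lia.
  have : y + l != a + k by apply/eqP => yk; rewrite yk in lyl; lia.
  lia.
Qed.

Lemma prop_b_of_bracket_level : bracket_level -> prop_b s.
Proof.
move=> BL i _ [a k] HA nt lv.
have [[/= an [k0 kn]] A] := HA.
have k1 : 1 < k by rewrite /trivial_arc /= in nt; lia.
pose J := [pred j : 'I_k | 0 < j]; pose F (j : 'I_k) := lab s (a + j).
have [jm jmJ mE] := @eq_bigmax_cond _ J F ltac:(by apply/card_gt0P; exists (Ordinal k1)).
exists (F jm) => v; rewrite internal_labelE; split.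
- case=> j /andP[j0 jk] <-; have [la lk] := A j j0 jk.
  split; first by move: lv; rewrite /level /=; lia.
  by rewrite -mE; apply: (@leq_bigmax_cond _ _ F (Ordinal jk)).
- case=> iv vm.
  apply: (descent_interval (P := fun w => exists2 j, 0 < j < k & lab s (a + j) = w)
                           (lo := i) (m := F jm)).
  + by exists jm; rewrite ?ltn_ord ?andbT.
  + by move=> w Pw; rewrite -lv; apply: arc_label_descent.
  + by rewrite iv.
Qed.

Lemma prop_a_of_prop_b : prop_b s -> prop_a s.
Proof.
move=> Hb i i1 [a k] HA nt lv.
have [m Hm] := Hb i i1 (a, k) HA nt lv.
have [[/= an [k0 kn]] A] := HA.
have k1 : 1 < k by rewrite /trivial_arc /= in nt; lia.
have [ia am] := (Hm (lab s (a + 1))).1 ltac:(by apply/internal_labelE; exists 1).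
have [c [[j [j0 [/= jk ac]]] lc]] := (Hm i.+1).2 ltac:(lia).
exists c; split; first by rewrite -ac ltn_pmod; lia.
by split=> //; exists j; rewrite ltnW.
Qed.

Lemma parent_arc_of_corner c : mobile_labels s -> bracket_level -> c < n -> 2 <= lab s c ->
  exists x k, bracket (c + n) x k /\
    [/\ is_arc s (x %% n, k), level s (x %% n, k) = (lab s c).-1,
        corner_in s (x %% n, k) c, ~ trivial_arc (x %% n, k) &
        forall B, is_arc s B -> level s B = (lab s c).-1 -> corner_in s B c ->
          B = (x %% n, k)].
Proof.
move=> Hs BL cn c2; have [x [k B]] := corner_bracket Hs cn c2.
have [HB cB nt lvE] := arc_of_bracket B.
have lv := BL _ _ _ B; rewrite lab_addn in lv.
rewrite modnDr (modn_small cn) in cB.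
exists x, k; split=> //; split=> //.
- by rewrite lvE -lv.
- move=> B' HB' lv' cB'; apply: bracket_arc_unique cn B HB' _ cB'; lia.
Qed.

Lemma parent_arc_of_arc A i : mobile_labels s -> bracket_level -> is_arc s A ->
  level s A = i -> 2 <= i ->
  exists B, [/\ is_arc s B, level s B = i.-1, arc_sub s A B, ~ trivial_arc B &
    forall B', is_arc s B' -> level s B' = i.-1 -> arc_sub s A B' -> B' = B].
Proof.
case: A => a k Hs BL HA lv i2; have [[/= an [k0 kn]] _] := HA.
have [j [jk aj]] : exists j, (j = 0 \/ j = k) /\ lab s (a + j) = i.
  move: lv; rewrite /level /= => lv.
  have [la|lk] : lab s a = i \/ lab s (a + k) = i by lia.
  - by exists 0; rewrite addn0; split; [left|].
  - by exists k; split; [right|].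
have jn : j <= n by case: jk => ->; lia.
have [c cn ac] : exists2 c, c < n & (a + j) %% n = c.
  by exists ((a + j) %% n); rewrite ?ltn_pmod //; lia.
have lc : lab s c = i by rewrite -ac lab_modn.
have [x [l [Bx [HB lvB cB ntB uB]]]] := parent_arc_of_corner Hs BL cn ltac:(lia).
rewrite lc in lvB uB; exists (x %% n, l); split=> //.
- have za := offset_start_modn an jn ac; have Az := line_arc_of_arc HA za.
  have [zx kl] := bracket_covers Bx Az ltac:(case: jk => ->; lia).
  exact: arc_sub_of_line za (erefl _) zx kl.
- move=> B' HB' lv' sub; apply: uB => //; apply: corner_in_sub sub _.
  by exists j; split=> //; case: jk => ->.
Qed.

End Labels.

Theorem lemma3 (s : seq nat) (Hs : mobile_labels s) :
  (* (i) *)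
  (forall A B, is_arc s A -> is_arc s B -> A <> B ->
     ~ trivial_arc A -> ~ trivial_arc B ->
     (exists c, (internal_corner s A c /\ corner_in s B c) \/
                (internal_corner s B c /\ corner_in s A c)) ->
     (arc_sub s A B /\ level s B < level s A) \/
     (arc_sub s B A /\ level s A < level s B))
  /\
  (* (ii) *)
  ((prop_a s <-> prop_b s) /\ (prop_b s <-> prop_c s))
  /\
  (* (iii) *)
  (prop_a s ->
   forall i, 2 <= i ->
     (forall A, is_arc s A -> level s A = i ->
        exists B, [/\ is_arc s B, level s B = i.-1, arc_sub s A B,
                      ~ trivial_arc B &
                      forall B', is_arc s B' -> level s B' = i.-1 ->
                                 arc_sub s A B' -> B' = B])
     /\
     (forall c, c < size s -> lab s c = i ->
        exists B, [/\ is_arc s B, level s B = i.-1, corner_in s B c,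
                      ~ trivial_arc B &
                      forall B', is_arc s B' -> level s B' = i.-1 ->
                                 corner_in s B' c -> B' = B])).
Proof.
have bracket_level_a := bracket_level_of_prop_a Hs.
split.
  move=> A B HA HB ne _ _ [c [[iA cB]|[iB cA]]]; first exact: arcs_nested HA HB ne iA cB.
  by case: (arcs_nested HB HA (nesym ne) iB cA) => h; [right | left].
split.
  split; split=> [Ha|Hb].
  - exact/prop_b_of_bracket_level/bracket_level_a.
  - exact: prop_a_of_prop_b.
  - exact/(prop_c_of_bracket_level Hs)/bracket_level_a/prop_a_of_prop_b.
  - exact/prop_b_of_bracket_level/(bracket_level_of_prop_c Hs).
move=> /bracket_level_a BL i i2; split=> [A HA lv | c cn ci].
  exact: parent_arc_of_arc.
have [x [k [_ parent]]] := parent_arc_of_corner Hs BL cn ltac:(lia).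
by exists (x %% size s, k); rewrite -ci.
Qed.
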